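(* Consider the three-link parallel network with unit demand and latencies $\ell_1(x_1)=x_1$, $\ell_2(x_2)=x_2$, $\ell_3(x_3)=\frac{x_3}{2}+\frac65$. Then every toll vector in the set $\left\{\left(t_1,\tfrac75-t_1,0\right)\ :\ \tfrac{24}{35}\le t_1\le\tfrac57\right\}$ is an uncapped subgame perfect Nash equilibrium; in particular $\mathcal{T}(\infty)$ contains infinitely many elements.
   Context: Flows $x\in\mathbb{R}^3_+$ with $x_1+x_2+x_3=1$. For tolls $t\in\mathbb{R}^3_+$, $x(t)$ is the unique Wardrop equilibrium for $t$ (for all $i,j$ with $x_i>0$: $\ell_i(x_i)+t_i\le\ell_j(x_j)+t_j$). Profit $\Pi_i(t)=t_ix_i(t)$. $\mathcal{T}(\infty)$: toll vectors $t\in\mathbb{R}^3_+$ such that for every $i$ and every $t'_i\ge0$, $\Pi_i(t_i,t_{-i})\ge\Pi_i(t'_i,t_{-i})$ (flow recomputed). Note that here the untolled Wardrop equilibrium does not have full support (link 3 is unused). *)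

From Stdlib Require Import Reals Lra List.
Open Scope R_scope.

(* Links are indexed 0,1,2 (paper's links 1,2,3). Flow and toll vectors are
   functions nat -> R, only indices < 3 matter. *)

Definition lat (i : nat) (y : R) : R :=
  match i with
  | O => y
  | S O => y
  | _ => y / 2 + 6 / 5
  end.

Definition vec3 (a b c : R) : nat -> R :=
  fun j => match j with O => a | S O => b | _ => c end.

Definition feasible (x : nat -> R) : Prop :=
  (forall i, (i < 3)%nat -> 0 <= x i) /\ x 0%nat + x 1%nat + x 2%nat = 1.

Definition wardrop (t x : nat -> R) : Prop :=
  feasible x /\
  forall i j, (i < 3)%nat -> (j < 3)%nat -> 0 < x i ->
    lat i (x i) + t i <= lat j (x j) + t j.

Definition nonneg_tolls (t : nat -> R) : Prop :=
  forall i, (i < 3)%nat -> 0 <= t i.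

Definition upd (t : nat -> R) (i : nat) (v : R) : nat -> R :=
  fun j => if Nat.eqb j i then v else t j.

(* Profit Pi_i(t) = t_i x_i(t) >= Pi_i(t') where x(.) is the (unique)
   Wardrop equilibrium: we require existence of the equilibria and compare
   profits for every equilibrium (uniqueness makes this the same as x(t)). *)
Definition profit_ge (i : nat) (t t' : nat -> R) : Prop :=
  (exists x, wardrop t x) /\ (exists x', wardrop t' x') /\
  forall x x', wardrop t x -> wardrop t' x' -> t' i * x' i <= t i * x i.

Definition in_T_infty (t : nat -> R) : Prop :=
  nonneg_tolls t /\
  forall i, (i < 3)%nat -> forall v, 0 <= v -> profit_ge i t (upd t i v).

(* Existence of equilibria: the equilibrium flow on each link is the positive
   part of its inverse latency at a common level L, and the total flow is a
   continuous function of L, so the intermediate value theorem yields a level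
   carrying exactly the unit demand.

   If link 1 charges v and still carries
   flow y, its Wardrop inequalities against links 2 and 3 give
   v <= 12/5 - t - 2y and 3v <= 24/5 - t - 4y; these bounds cross exactly at
   the base flow y0 = 6/5 - t, and y times either bound is at most t y0 on its
   side of y0 as long as 24/35 <= t <= 5/7.  Link 2 is symmetric to link 1
   (the interval is invariant under t |-> 7/5 - t), and link 3 gets no flow
   whatever toll it charges. *)
From Stdlib Require Import Reals List Lra Lia Psatz.
Open Scope R_scope.

Definition inv_lat (i : nat) (L : R) : R :=
  match i with
  | O | S O => L
  | _ => 2 * (L - 6 / 5)
  end.

Lemma lat_inv_lat i L : lat i (inv_lat i L) = L.
Proof. destruct i as [|[|i]]; simpl; lra. Qed.

Lemma lat_le_compat i y z : y <= z -> lat i y <= lat i z.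
Proof. destruct i as [|[|i]]; simpl; lra. Qed.

Definition level_flow (t : nat -> R) (L : R) (i : nat) : R :=
  Rmax 0 (inv_lat i (L - t i)).

Lemma level_flow_wardrop t L :
  level_flow t L 0 + level_flow t L 1 + level_flow t L 2 = 1 ->
  wardrop t (level_flow t L).
Proof.
  intros Hsum; split; [split; [intros i _; apply Rmax_l | exact Hsum]|].
  intros i j _ _ Hpos.
  assert (Hi : level_flow t L i = inv_lat i (L - t i)).
  { unfold level_flow in *.
    destruct (Rle_or_lt (inv_lat i (L - t i)) 0) as [Hle|Hlt].
    - rewrite Rmax_left in Hpos by exact Hle. lra.
    - apply Rmax_right; lra. }
  assert (Hj : L - t j <= lat j (level_flow t L j)).
  { rewrite <- (lat_inv_lat j (L - t j)). apply lat_le_compat, Rmax_r. }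
  rewrite Hi, lat_inv_lat. lra.
Qed.

Lemma continuity_Rmax0 : continuity (Rmax 0).
Proof.
  intro a.
  apply (continuity_pt_locally_ext (fun y => (y + Rabs y) / 2) _ 1); [lra| |].
  - intros y _. unfold Rmax, Rabs. destruct Rle_dec, Rcase_abs; lra.
  - reg.
Qed.

Lemma wardrop_exists t : exists x, wardrop t x.
Proof.
  set (M := Rabs (t 0%nat) + Rabs (t 1%nat) + Rabs (t 2%nat) + 2).
  assert (Habs : forall y, - Rabs y <= y <= Rabs y).
  { intro y; split; [|apply Rle_abs].
    rewrite <- (Ropp_involutive y) at 2; rewrite <- Rabs_Ropp.
    apply Ropp_le_contravar, Rle_abs. }
  pose proof (Habs (t 0%nat)); pose proof (Habs (t 1%nat));
    pose proof (Habs (t 2%nat)).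
  set (F L := level_flow t L 0 + level_flow t L 1 + level_flow t L 2 - 1).
  assert (HF : continuity F).
  { unfold F, level_flow; simpl. reg; apply continuity_Rmax0. }
  assert (Hlow : F (- M) < 0).
  { unfold F, level_flow; simpl.
    rewrite !Rmax_left by (unfold M; lra). lra. }
  assert (Hhigh : 0 < F M).
  { unfold F, level_flow; simpl.
    pose proof (Rmax_r 0 (M - t 0%nat)).
    pose proof (Rmax_l 0 (M - t 1%nat)).
    pose proof (Rmax_l 0 (2 * (M - t 2%nat - 6 / 5))).
    unfold M in *; lra. }
  destruct (IVT F (- M) M HF ltac:(unfold M; lra) Hlow Hhigh) as [L [_ HL]].
  exists (level_flow t L). apply level_flow_wardrop. unfold F in HL; lra.
Qed.

Lemma wardrop_link3_unused t x :
  t 0%nat + t 1%nat <= 7 / 5 + 2 * t 2%nat -> wardrop t x -> x 2%nat = 0.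
Proof.
  intros Ht [[Hnn Hsum] Hw].
  pose proof (Hnn 2%nat ltac:(lia)) as H2.
  destruct (Rle_lt_or_eq_dec _ _ H2) as [Hpos|]; [|lra].
  pose proof (Hw 2%nat 0%nat ltac:(lia) ltac:(lia) Hpos).
  pose proof (Hw 2%nat 1%nat ltac:(lia) ltac:(lia) Hpos).
  simpl in *. lra.
Qed.

Lemma wardrop_two_link_flow t x :
  -1 < t 0%nat - t 1%nat < 1 -> wardrop t x -> x 2%nat = 0 ->
  x 0%nat = (1 - t 0%nat + t 1%nat) / 2.
Proof.
  intros Ht [[Hnn Hsum] Hw] H2.
  pose proof (Hnn 0%nat ltac:(lia)) as H0; pose proof (Hnn 1%nat ltac:(lia)) as H1.
  assert (P0 : 0 < x 0%nat).
  { destruct (Rle_lt_or_eq_dec _ _ H0) as [|E]; [assumption|].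
    pose proof (Hw 1%nat 0%nat ltac:(lia) ltac:(lia) ltac:(lra)); simpl in *; lra. }
  assert (P1 : 0 < x 1%nat).
  { destruct (Rle_lt_or_eq_dec _ _ H1) as [|E]; [assumption|].
    pose proof (Hw 0%nat 1%nat ltac:(lia) ltac:(lia) P0); simpl in *; lra. }
  pose proof (Hw 0%nat 1%nat ltac:(lia) ltac:(lia) P0).
  pose proof (Hw 1%nat 0%nat ltac:(lia) ltac:(lia) P1).
  simpl in *. lra.
Qed.

Lemma base_flow t1 x :
  24 / 35 <= t1 <= 5 / 7 -> wardrop (vec3 t1 (7 / 5 - t1) 0) x ->
  x 0%nat = 6 / 5 - t1 /\ x 1%nat = t1 - 1 / 5 /\ x 2%nat = 0.
Proof.
  intros Ht Hx.
  assert (H2 : x 2%nat = 0) by (refine (wardrop_link3_unused _ _ _ Hx); simpl; lra).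
  assert (H0 : x 0%nat = (1 - t1 + (7 / 5 - t1)) / 2)
    by (refine (wardrop_two_link_flow _ _ _ Hx H2); simpl; lra).
  destruct Hx as [[_ Hsum] _]. lra.
Qed.

Lemma deviation_profit_le s v y z w :
  24 / 35 <= s <= 5 / 7 -> 0 <= y -> 0 <= z -> 0 <= w -> y + z + w = 1 ->
  (0 < y -> y + v <= z + (7 / 5 - s) /\ y + v <= w / 2 + 6 / 5) ->
  v * y <= s * (6 / 5 - s).
Proof.
  intros Hs Hy Hz Hw Hsum Hwar.
  destruct (Rle_lt_or_eq_dec _ _ Hy) as [Hpos|<-]; [|nra].
  destruct (Hwar Hpos) as [Hv2 Hv3].
  assert (B2 : v <= 12 / 5 - s - 2 * y) by lra.
  assert (B3 : 3 * v <= 24 / 5 - s - 4 * y) by lra.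
  destruct (Rle_or_lt (6 / 5 - s) y) as [Hhi|Hlo].
  - (* v y <= y (12/5 - s - 2y) = s (6/5 - s) - (y - (6/5 - s)) (2y - s) *)
    assert (0 <= (y - (6 / 5 - s)) * (2 * y - s)) by (apply Rmult_le_pos; lra).
    nra.
  - (* 3 v y <= y (24/5 - s - 4y) = 3 s (6/5 - s) - (6/5 - s - y) (3s - 4y) *)
    assert (0 <= (6 / 5 - s - y) * (3 * s - 4 * y)) by (apply Rmult_le_pos; lra).
    nra.
Qed.

Lemma toll_line_in_T_infty t1 :
  24 / 35 <= t1 <= 5 / 7 -> in_T_infty (vec3 t1 (7 / 5 - t1) 0).
Proof.
  intros Ht. split.
  { intros [|[|[|i]]] Hi; simpl; lra || lia. }
  intros i Hi v Hv.
  split; [apply wardrop_exists|]. split; [apply wardrop_exists|].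
  intros x x' Hx Hx'.
  destruct (base_flow _ _ Ht Hx) as [E0 [E1 E2]].
  pose proof Hx' as [[Hnn Hsum] Hw].
  pose proof (Hnn 0%nat ltac:(lia)); pose proof (Hnn 1%nat ltac:(lia));
    pose proof (Hnn 2%nat ltac:(lia)).
  unfold upd in *.
  destruct i as [|[|[|i]]]; [| | |lia]; simpl in *.
  - rewrite E0.
    apply (deviation_profit_le t1 v (x' 0%nat) (x' 1%nat) (x' 2%nat)); try lra.
    intros P; split.
    + pose proof (Hw 0%nat 1%nat ltac:(lia) ltac:(lia) P); simpl in *; lra.
    + pose proof (Hw 0%nat 2%nat ltac:(lia) ltac:(lia) P); simpl in *; lra.
  - rewrite E1. replace (t1 - 1 / 5) with (6 / 5 - (7 / 5 - t1)) by lra.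
    apply (deviation_profit_le (7 / 5 - t1) v (x' 1%nat) (x' 0%nat) (x' 2%nat));
      try lra.
    intros P; split.
    + pose proof (Hw 1%nat 0%nat ltac:(lia) ltac:(lia) P); simpl in *; lra.
    + pose proof (Hw 1%nat 2%nat ltac:(lia) ltac:(lia) P); simpl in *; lra.
  - replace (x' 2%nat) with 0; [lra|].
    symmetry; refine (wardrop_link3_unused _ _ _ Hx'); simpl; lra.
Qed.

Lemma open_interval_not_in_list (L : list R) a b :
  a < b -> exists y, a < y < b /\ ~ In y L.
Proof.
  revert a b; induction L as [|h L IH]; intros a b Hab.
  - exists ((a + b) / 2); simpl; lra.
  - destruct (Rle_dec h ((a + b) / 2)).
    + destruct (IH ((a + b) / 2) b) as [y [Hy Hn]]; [lra|].
      exists y; split; [lra|]; simpl; intros [E|E]; [lra|auto].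
    + destruct (IH a ((a + b) / 2)) as [y [Hy Hn]]; [lra|].
      exists y; split; [lra|]; simpl; intros [E|E]; [lra|auto].
Qed.

Theorem mainTheorem13 :
  (forall t1 : R, 24 / 35 <= t1 <= 5 / 7 ->
     in_T_infty (vec3 t1 (7 / 5 - t1) 0)) /\
  ~ (exists l : list (nat -> R), forall t, in_T_infty t -> In t l).
Proof.
  split; [exact toll_line_in_T_infty|].
  intros [l Hl].
  destruct (open_interval_not_in_list (map (fun t => t 0%nat) l) (24 / 35) (5 / 7))
    as [y [Hy Hnotin]]; [lra|].
  apply Hnotin, (in_map (fun t => t 0%nat) l (vec3 y (7 / 5 - y) 0)).
  apply Hl, toll_line_in_T_infty; lra.
Qed.
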